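(* Let $f,g\in C[0,1]$ satisfy $f(x)\neq0$ and $g(x)\neq0$ for all $x\in[0,1]$, and suppose $\overline{\dim}_B G(f)\neq\overline{\dim}_B G(g)$. Then $$\overline{\dim}_B G(f\cdot g)=\max\{\overline{\dim}_B G(f),\ \overline{\dim}_B G(g)\}.$$
   Context: $C[0,1]$ is the space of real-valued continuous functions on $[0,1]$; $G(f)=\{(x,f(x)):x\in[0,1]\}\subset\mathbb{R}^2$ is the graph of $f$; $f\cdot g$ is the pointwise product. For a nonempty bounded set $F$, $N_\delta(F)$ is the smallest number of sets of diameter at most $\delta$ covering $F$, and $\overline{\dim}_B F=\limsup_{\delta\to0}\frac{\log N_\delta(F)}{-\log\delta}$. *)

From HB Require Import structures.
From mathcomp Require Import all_boot all_order all_algebra.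
From mathcomp Require Import all_classical all_reals all_analysis.
Set Implicit Arguments. Unset Strict Implicit. Unset Printing Implicit Defensive.
Import Order.TTheory GRing.Theory Num.Theory.
Import numFieldNormedType.Exports.
Local Open Scope classical_set_scope.
Local Open Scope ring_scope.

Section BoxDim.
Variable R : realType.

Definition edist (p q : R * R) : R :=
  Num.sqrt ((p.1 - q.1) ^+ 2 + (p.2 - q.2) ^+ 2).

(* diameter of a subset of R^2 (extended real; -oo for the empty set) *)
Definition ediam (A : set (R * R)) : \bar R :=
  ereal_sup [set (edist p.1 p.2)%:E | p in A `*` A].

Definition delta_cover (F : set (R * R)) (delta : R) (n : nat) : Prop :=
  exists C : 'I_n -> set (R * R),
    (forall i, (ediam (C i) <= delta%:E)%E) /\ F `<=` \bigcup_(i in setT) C i.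

Definition covnum (F : set (R * R)) (delta : R) : \bar R :=
  ereal_inf [set (n%:R)%:E | n in delta_cover F delta].

Definition upper_box_dim (F : set (R * R)) : \bar R :=
  limf_esup (fun delta : R => (ln (fine (covnum F delta)) / - ln delta)%:E)
            (0%R)^'+.

Definition graph01 (f : R -> R) : set (R * R) :=
  [set (x, f x) | x in `[0%R, 1%R]].

End BoxDim.

From Pilot Require Import Defs.
From HB Require Import structures.
From mathcomp Require Import all_boot all_order all_algebra.
From mathcomp Require Import all_classical all_reals all_analysis.
From mathcomp Require Import ring lra zify.
Import Order.TTheory GRing.Theory Num.Theory.
Import numFieldNormedType.Exports.
Local Open Scope classical_set_scope.
Local Open Scope ring_scope.

(* Cut [0, 1] into columns of width d/2. For continuous h, the covering number
   N_d(G(h)) is comparable, up to the factor 21, with the column sum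
   \sum_j (2 osc_j h / d + 1), where osc_j h is the oscillation of h on the
   j-th column: stacking boxes of side d/2 above each column gives the upper
   bound; conversely, a set of diameter at most d meets at most seven columns,
   and the sets meeting a column must cover the whole range of h on it.
   The column sum is monotone under pointwise domination of oscillations, so
   |h x - h y| <= A |u x - u y| + B |v x - v y| on [0, 1] gives
   dim G(h) <= max (dim G(u), dim G(v)).  Since f and g are bounded and bounded
   away from 0, f g is dominated by (f, g), f by (f g, g) and g by (f g, f); as
   dim G(f) <> dim G(g), these three inequalities force the equality. *)

Section GraphBoxDimension.
Set Implicit Arguments. Unset Strict Implicit.
Variable R : realType.
Implicit Types (A B : set (R * R)) (d : R) (f g h u v : R -> R).

Lemma ediam_le A d :
  (forall p q, A p -> A q -> Defs.edist p q <= d) -> (ediam A <= d%:E)%E.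
Proof.
by move=> H; apply/ereal_supP => _ [[p q] [/= Ap Aq] <-]; rewrite lee_fin; exact: H.
Qed.

Lemma edist_le_ediam A d p q : (ediam A <= d%:E)%E -> A p -> A q -> Defs.edist p q <= d.
Proof.
move=> H Ap Aq; rewrite -lee_fin; apply: le_trans H.
by apply: ereal_sup_ubound; exists (p, q).
Qed.

Lemma normB1_le_edist (p q : R * R) : `|p.1 - q.1| <= Defs.edist p q.
Proof. by rewrite -sqrtr_sqr /Defs.edist ler_wsqrtr // lerDl sqr_ge0. Qed.

Lemma normB2_le_edist (p q : R * R) : `|p.2 - q.2| <= Defs.edist p q.
Proof. by rewrite -sqrtr_sqr /Defs.edist ler_wsqrtr // lerDr sqr_ge0. Qed.

Lemma edist_le_box (a b c e d : R) p q : 0 <= d -> b - a <= d / 2 -> e - c <= d / 2 ->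
  a <= p.1 <= b -> c <= p.2 <= e -> a <= q.1 <= b -> c <= q.2 <= e ->
  Defs.edist p q <= d.
Proof.
move=> d0 ab ce /andP[? ?] /andP[? ?] /andP[? ?] /andP[? ?].
have h1 : `|p.1 - q.1| <= d / 2 by rewrite ler_norml; apply/andP; split; lra.
have h2 : `|p.2 - q.2| <= d / 2 by rewrite ler_norml; apply/andP; split; lra.
rewrite /Defs.edist -(ger0_norm d0) -sqrtr_sqr ler_wsqrtr //.
rewrite -(real_normK (num_real (p.1 - q.1))) -(real_normK (num_real (p.2 - q.2))).
have := normr_ge0 (p.1 - q.1); have := normr_ge0 (p.2 - q.2); nra.
Qed.

Lemma delta_coverS A B d n : A `<=` B -> delta_cover B d n -> delta_cover A d n.
Proof. by move=> AB [C [hC cC]]; exists C; split => // p /AB /cC. Qed.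

Lemma delta_cover1 A d :
  (forall p q, A p -> A q -> Defs.edist p q <= d) -> delta_cover A d 1.
Proof.
by move=> H; exists (fun=> A); split=> [_|p Ap]; [exact: ediam_le | exists ord0].
Qed.

Lemma delta_coverU A B d m n :
  delta_cover A d m -> delta_cover B d n -> delta_cover (A `|` B) d (m + n).
Proof.
move=> [C1 [h1 c1]] [C2 [h2 c2]].
exists (fun i => match fintype.split i with inl a => C1 a | inr b => C2 b end); split.
- by move=> i; case: fintype.split => ?; [exact: h1 | exact: h2].
- move=> p [/c1 [i _ Ci] | /c2 [i _ Ci]].
  + by exists (fintype.unsplit (inl i)) => //; rewrite fintype.unsplitK.
  + by exists (fintype.unsplit (inr i)) => //; rewrite fintype.unsplitK.
Qed.

Lemma delta_cover_bigcup (G : nat -> set (R * R)) (n : nat -> nat) d m :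
  (forall j, (j < m)%N -> delta_cover (G j) d (n j)) ->
  delta_cover [set p | exists2 j, (j < m)%N & G j p] d (\sum_(j < m) n j).
Proof.
elim: m => [|m IH] H.
  rewrite big_ord0; exists (fun=> set0); split=> [i | p []//].
  exact: ediam_le.
rewrite big_ord_recr /=.
apply: (@delta_coverS _ ([set p | exists2 j, (j < m)%N & G j p] `|` G m)).
  move=> p [j]; rewrite ltnS leq_eqVlt => /orP[/eqP -> | jm] Gp; first by right.
  by left; exists j.
by apply: delta_coverU; [apply: IH => j jm; apply: H; exact: ltnW | exact: H].
Qed.

Definition col_lo d (j : nat) : R := j%:R * (d / 2).
Definition col_hi d (j : nat) : R := Num.min (j.+1%:R * (d / 2)) 1.
Definition ncols d := (Num.truncn (2 / d)).+1.

Lemma col_itv d j : 0 < d -> (j < ncols d)%N ->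
  [/\ 0 <= col_lo d j, col_lo d j <= col_hi d j, col_hi d j <= 1
    & col_hi d j - col_lo d j <= d / 2].
Proof.
move=> d0; rewrite ltnS truncn_ge_nat; last by rewrite divr_ge0 // ltW.
move=> jd; have e : 2 / d * d = 2 by field; rewrite gt_eqF.
have lo1 : col_lo d j <= 1 by rewrite /col_lo; nra.
have hi_le : col_hi d j <= j.+1%:R * (d / 2) by rewrite ge_min lexx.
rewrite /col_lo -natr1 in lo1 hi_le *.
split; [by rewrite mulr_ge0 // divr_ge0 // ltW | | by rewrite ge_min lexx orbT | lra].
rewrite le_min lo1 andbT ler_wpM2r ?divr_ge0 ?ltW //; lra.
Qed.

Lemma col_sub01 d j : 0 < d -> (j < ncols d)%N ->
  `[col_lo d j, col_hi d j] `<=` (`[0, 1] : set R).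
Proof.
move=> d0 jn; have [? ? ? ?] := col_itv d0 jn.
move=> x /=; rewrite !in_itv /= => /andP[? ?]; apply/andP; split; lra.
Qed.

Lemma col_cover d x : 0 < d -> 0 <= x <= 1 ->
  exists2 j, (j < ncols d)%N & col_lo d j <= x <= col_hi d j.
Proof.
move=> d0 /andP[x0 x1].
have y0 : 0 <= 2 * x / d by apply: divr_ge0; lra.
exists (Num.truncn (2 * x / d)); first by rewrite ltnS le_truncn // ler_pM2r ?invr_gt0 //; lra.
have /andP[t1 t2] := truncn_itv y0; set j := Num.truncn _ in t1 t2 *.
have e : 2 * x / d * d = 2 * x by field; rewrite gt_eqF.
have j0 : 0 <= j%:R :> R by [].
have e1 : (j.+1%:R : R) = j%:R + 1 by rewrite natr1.
rewrite /col_lo /col_hi le_min x1 andbT; apply/andP; split; nra.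
Qed.

Lemma ivt_itv h a b c1 c2 y : {within `[a, b], continuous h} ->
  c1 \in `[a, b] -> c2 \in `[a, b] -> h c1 <= y <= h c2 ->
  exists2 x, x \in `[a, b] & h x = y.
Proof.
move=> hc c1i c2i /andP[y1 y2].
have ivt l r : l \in `[a, b] -> r \in `[a, b] -> l <= r ->
    Num.min (h l) (h r) <= y <= Num.max (h l) (h r) ->
    exists2 x, x \in `[a, b] & h x = y.
  move=> li ri lr hy.
  have sub : `[l, r] `<=` (`[a, b] : set R).
    move=> z /=; move: li ri; rewrite !in_itv /= => /andP[? ?] /andP[? ?] /andP[? ?].
    by apply/andP; split; lra.
  have [x xi hx] := IVT lr (continuous_subspaceW sub hc) hy.
  by exists x => //; exact: sub.
have [le12 | /ltW le21] := leP c1 c2.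
  by apply: ivt le12 _ => //; rewrite ge_min le_max y1 y2 orbT.
by apply: ivt le21 _ => //; rewrite ge_min le_max y1 y2 orbT.
Qed.

Definition is_argmin_itv h (a b c : R) :=
  c \in `[a, b] /\ forall t, t \in `[a, b] -> h c <= h t.
Definition is_argmax_itv h (a b c : R) :=
  c \in `[a, b] /\ forall t, t \in `[a, b] -> h t <= h c.
Definition argmin_itv h a b := xget a (is_argmin_itv h a b).
Definition argmax_itv h a b := xget a (is_argmax_itv h a b).
Definition osc h a b := h (argmax_itv h a b) - h (argmin_itv h a b).

Lemma argmin_itvP h a b : a <= b -> {within `[a, b], continuous h} ->
  is_argmin_itv h a b (argmin_itv h a b).
Proof. by move=> ab hc; apply: xgetPex; have [c] := EVT_min ab hc; exists c. Qed.

Lemma argmax_itvP h a b : a <= b -> {within `[a, b], continuous h} ->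
  is_argmax_itv h a b (argmax_itv h a b).
Proof. by move=> ab hc; apply: xgetPex; have [c] := EVT_max ab hc; exists c. Qed.

Lemma osc_ge0 h a b : a <= b -> {within `[a, b], continuous h} -> 0 <= osc h a b.
Proof.
move=> ab hc; have [_ m2] := argmin_itvP ab hc; have [M1 _] := argmax_itvP ab hc.
by rewrite subr_ge0; exact: m2 _ M1.
Qed.

Lemma osc_ge h a b x y : a <= b -> {within `[a, b], continuous h} ->
  x \in `[a, b] -> y \in `[a, b] -> `|h x - h y| <= osc h a b.
Proof.
move=> ab hc xi yi; have [_ m2] := argmin_itvP ab hc; have [_ M2] := argmax_itvP ab hc.
have := m2 _ xi; have := m2 _ yi; have := M2 _ xi; have := M2 _ yi.
by rewrite /osc ler_norml => *; apply/andP; split; lra.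
Qed.

Lemma delta_cover_strip h a b d : 0 < d -> a <= b -> b - a <= d / 2 ->
  {within `[a, b], continuous h} ->
  delta_cover [set p | a <= p.1 <= b /\ p.2 = h p.1] d
    (Num.truncn (2 * osc h a b / d)).+1.
Proof.
move=> d0 ab bad hc; have [lo_ab lo_min] := argmin_itvP ab hc.
set lo := h (argmin_itv h a b) in lo_min *.
pose box (k : nat) := [set p : R * R | a <= p.1 <= b /\
  lo + k%:R * (d / 2) <= p.2 <= lo + k.+1%:R * (d / 2)].
set t := (Num.truncn _).+1.
apply: (@delta_coverS _ [set p | exists2 k, (k < t)%N & box k p]); last first.
  rewrite -[X in delta_cover _ _ X]card_ord -sum1_card.
  apply: (@delta_cover_bigcup box (fun=> 1%N)) => k _; apply: delta_cover1 => p q [pa pb] [qa qb].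
  by apply: (edist_le_box (ltW d0) bad _ pa pb qa qb); rewrite -natr1; lra.
move=> [x y] /= [xab ->].
have xi : x \in `[a, b] by rewrite in_itv.
have hx := lo_min _ xi; have hosc := osc_ge ab hc xi lo_ab.
have y0 : 0 <= (h x - lo) / (d / 2) by apply: divr_ge0; lra.
have e : (h x - lo) / (d / 2) * (d / 2) = h x - lo by field; rewrite gt_eqF.
exists (Num.truncn ((h x - lo) / (d / 2))).
  rewrite ltnS le_truncn // ler_pdivrMr ?divr_gt0 //.
  have -> : 2 * osc h a b / d * (d / 2) = osc h a b by field; rewrite gt_eqF.
  by move: hosc; rewrite ger0_norm ?subr_ge0.
have /andP[t1 t2] := truncn_itv y0; set k := Num.truncn _ in t1 t2 *.
have e1 : (k.+1%:R : R) = k%:R + 1 by rewrite natr1.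
by split => //=; apply/andP; split; nra.
Qed.

Definition col_osc_sum h d :=
  \sum_(j < ncols d) (2 * osc h (col_lo d j) (col_hi d j) / d + 1).

Lemma delta_cover_graph_col_osc_sum h d : 0 < d -> {within `[0, 1], continuous h} ->
  exists n, delta_cover (graph01 h) d n /\ n%:R <= col_osc_sum h d.
Proof.
move=> d0 hc.
pose t j := (Num.truncn (2 * osc h (col_lo d j) (col_hi d j) / d)).+1.
have col_cont j : (j < ncols d)%N ->
    {within `[col_lo d j, col_hi d j], continuous h}.
  by move=> jn; exact: continuous_subspaceW (col_sub01 d0 jn) hc.
exists (\sum_(j < ncols d) t j); split.
  apply: (delta_coverS _ (delta_cover_bigcup (G := fun j =>
    [set p | col_lo d j <= p.1 <= col_hi d j /\ p.2 = h p.1]) _)).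
    move=> _ [x x01 <-]; rewrite /= in_itv /= in x01.
    by have [j jn xj] := col_cover d0 x01; exists j.
  move=> j jn; have [_ lohi _ width] := col_itv d0 jn.
  exact: delta_cover_strip d0 lohi width (col_cont j jn).
rewrite /col_osc_sum natr_sum; apply: ler_sum => j _; rewrite /t -natr1 lerD2r.
have [_ lohi _ _] := col_itv d0 (ltn_ord j).
rewrite truncn_le; apply: divr_ge0 (ltW d0).
by apply: mulr_ge0 => //; apply: osc_ge0 lohi (col_cont _ (ltn_ord j)).
Qed.

Lemma itv_len_le_cover (I : eqType) (D : I -> set R) d (l : seq I) a b :
  0 <= d -> (forall i y1 y2, D i y1 -> D i y2 -> y1 - y2 <= d) -> a <= b ->
  (forall y, a <= y <= b -> exists2 i, i \in l & D i y) ->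
  b - a <= (size l)%:R * d.
Proof.
move=> d0 Dd; move sl : (size l) => k; elim: k l b sl => [|k IH] l b sl ab cov;
  have [|i il Dib] := cov b; rewrite ?ab ?lexx //.
  by rewrite (size0nil sl) in il.
apply/ler_addgt0Pr => e e0.
have kd : 0 <= k%:R * d by apply: mulr_ge0.
rewrite -natr1 mulrDl mul1r.
have [lt | ge] := ltP (b - d - e) a; first lra.
suff : b - d - e - a <= k%:R * d by lra.
apply: (IH (rem i l)) => //; first by rewrite size_rem // sl.
move=> y /andP[ay yb]; have [|j jl Djy] := cov y; first by rewrite ay /=; lra.
exists j => //; apply: rem_mem => //; apply/eqP => ji; subst j.
by have := Dd _ _ _ Dib Djy; lra.
Qed.

Lemma sum_card_exchange m n (P : 'I_n -> 'I_m -> bool) :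
  (\sum_(j < m) #|[set i | P i j]%SET| = \sum_(i < n) #|[set j | P i j]%SET|)%N.
Proof.
have card_set (k : nat) (Q : pred 'I_k) : #|[set i | Q i]%SET| = (\sum_(i < k) Q i)%N.
  by rewrite -sum1dep_card big_mkcond /=; apply: eq_bigr => i _; case: (Q i).
rewrite (eq_bigr _ (fun j _ => card_set _ (P^~ j))) exchange_big.
by apply: eq_bigr => i _; rewrite card_set.
Qed.

Lemma card_window7 m (J : {set 'I_m}) :
  (forall j1 j2, j1 \in J -> j2 \in J -> (j1 <= j2 + 3)%N) -> (#|J| <= 7)%N.
Proof.
move=> HJ; have [->|[j0 j0J]] := set_0Vmem J; first by rewrite cards0.
pose f (j : 'I_m) : 'I_7 := inord (j + 3 - j0).
rewrite -(@card_in_imset _ _ f); first by apply: leq_trans (max_card _) _; rewrite card_ord.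
move=> j k jJ kJ /(congr1 val) /= fjk.
have := HJ _ _ jJ j0J; have := HJ _ _ j0J jJ.
have := HJ _ _ kJ j0J; have := HJ _ _ j0J kJ.
by move=> *; rewrite !inordK in fjk; try lia; apply: val_inj => /=; lia.
Qed.

Lemma osc_le_cover h a b d n (C : 'I_n -> set (R * R)) : 0 < d -> a <= b ->
  {within `[a, b], continuous h} -> (forall i, (ediam (C i) <= d%:E)%E) ->
  (forall x, a <= x <= b -> exists i, C i (x, h x)) ->
  2 * osc h a b / d + 1 <=
    3 * #|[set i | `[< exists2 x, a <= x <= b & C i (x, h x) >]]%SET|%:R.
Proof.
move=> d0 ab hc hC cov; set J := [set i | _]%SET.
have [lo_ab lo_min] := argmin_itvP ab hc; have [hi_ab _] := argmax_itvP ab hc.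
have covJ y : h (argmin_itv h a b) <= y <= h (argmax_itv h a b) ->
    exists2 i, i \in enum J & exists x, C i (x, y).
  move=> hy; have [x xi hxy] := ivt_itv hc lo_ab hi_ab hy.
  have [i Ci] : exists i, C i (x, h x) by apply: cov; rewrite in_itv in xi.
  exists i; last by exists x; rewrite -hxy.
  by rewrite mem_enum inE; apply/asboolP; exists x; rewrite -?in_itv.
have oscJ : osc h a b <= #|J|%:R * d.
  rewrite cardE; apply: itv_len_le_cover covJ; [exact: ltW | | exact: lo_min].
  move=> i y1 y2 [x1 C1] [x2 C2]; apply: le_trans (ler_norm _) _.
  apply: le_trans (normB2_le_edist (x1, y1) (x2, y2)) _.
  exact: edist_le_ediam (hC i) C1 C2.
have J1 : (1 <= #|J|)%N.
  have [|i iJ _] := covJ (h (argmin_itv h a b)); first by rewrite lexx lo_min.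
  by rewrite card_gt0; apply/set0Pn; exists i; rewrite -mem_enum.
have : (1 : R) <= #|J|%:R by rewrite ler1n.
have : osc h a b / d <= #|J|%:R by rewrite ler_pdivrMr.
rewrite mulrAC; lra.
Qed.

Lemma col_osc_sum_le_cover h d n : 0 < d -> {within `[0, 1], continuous h} ->
  delta_cover (graph01 h) d n -> col_osc_sum h d <= 21 * n%:R.
Proof.
move=> d0 hc [C [hC cC]].
pose P (i : 'I_n) (j : 'I_(ncols d)) :=
  `[< exists2 x, col_lo d j <= x <= col_hi d j & C i (x, h x) >].
have col (j : 'I_(ncols d)) : 2 * osc h (col_lo d j) (col_hi d j) / d + 1 <=
    3 * #|[set i | P i j]%SET|%:R.
  have [_ lohi _ _] := col_itv d0 (ltn_ord j); have sub := col_sub01 d0 (ltn_ord j).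
  apply: osc_le_cover d0 lohi (continuous_subspaceW sub hc) hC _ => x xj.
  have x01 : x \in `[0, 1] by apply: sub; rewrite /= in_itv.
  by have [i _ Ci] := cC (x, h x) (ex_intro2 _ _ x x01 erefl); exists i.
apply: le_trans (ler_sum _ (fun j _ => col j)) _.
rewrite -mulr_sumr -natr_sum sum_card_exchange natr_sum.
(* 21 = 3 * 7: a set of diameter at most d meets at most seven columns of width d/2 *)
have -> : (21 : R) * n%:R = 3 * \sum_(i < n) 7 by rewrite sumr_const card_ord; lra.
rewrite ler_pM2l // ler_sum // => i _; rewrite ler_nat card_window7 // => j1 j2.
rewrite !inE => -[x1 x1j C1] [x2 x2j C2].
case/andP: x1j => x1lo _; case/andP: x2j => _ x2hi.
have hx : x1 - x2 <= d.
  apply: le_trans (ler_norm _) (le_trans _ (edist_le_ediam (hC i) C1 C2)).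
  exact: (normB1_le_edist (x1, h x1) (x2, h x2)).
move: x2hi; rewrite /col_hi le_min => /andP[x2hi _]; rewrite /col_lo in x1lo.
have e1 : (j2.+1%:R : R) = j2%:R + 1 by rewrite natr1.
have : (j1%:R : R) <= j2%:R + 3 by nra.
by rewrite -[3]/(3%:R) -natrD ler_nat.
Qed.

Definition graph_covnum h d := fine (covnum (graph01 h) d).

Lemma graph_covnum_bounds h d : 0 < d -> {within `[0, 1], continuous h} ->
  [/\ 1 <= graph_covnum h d, graph_covnum h d <= col_osc_sum h d
    & col_osc_sum h d <= 21 * graph_covnum h d].
Proof.
move=> d0 hc; have [n0 [cov0 n0le]] := delta_cover_graph_col_osc_sum d0 hc.
have covle : (covnum (graph01 h) d <= n0%:R%:E)%E.
  by apply: ge_ereal_inf; exists n0%:R%:E => //; exists n0.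
have covge : ((Num.max 1 (col_osc_sum h d / 21))%:E <= covnum (graph01 h) d)%E.
  apply/ereal_infP => _ [n cov <-]; rewrite lee_fin ge_max.
  have := col_osc_sum_le_cover d0 hc cov.
  case: n cov => [[C [_ cC]] | n _]; last by rewrite ler1n /=; lra.
  have x01 : (0 : R) \in `[0, 1] by rewrite in_itv /= lexx ler01.
  by have [[]] := cC (0, h 0) (ex_intro2 _ _ 0 x01 erefl).
rewrite /graph_covnum; move: covle covge; case: covnum => [r | |] //=.
by rewrite !lee_fin ge_max => ? /andP[? ?]; split; lra.
Qed.

Lemma osc_dominated h u v (A B : R) a b : a <= b -> 0 <= A -> 0 <= B ->
  {within `[a, b], continuous h} -> {within `[a, b], continuous u} ->
  {within `[a, b], continuous v} ->
  (forall x y, x \in `[a, b] -> y \in `[a, b] ->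
     `|h x - h y| <= A * `|u x - u y| + B * `|v x - v y|) ->
  osc h a b <= A * osc u a b + B * osc v a b.
Proof.
move=> ab A0 B0 hh hu hv H.
have [m1 _] := argmin_itvP ab hh; have [M1 _] := argmax_itvP ab hh.
apply: le_trans (ler_norm _) (le_trans (H _ _ M1 m1) _).
by apply: lerD; apply: ler_wpM2l => //; exact: osc_ge.
Qed.

Lemma col_osc_sum_dominated h u v (A B : R) d : 0 < d -> 0 <= A -> 0 <= B ->
  {within `[0, 1], continuous h} -> {within `[0, 1], continuous u} ->
  {within `[0, 1], continuous v} ->
  (forall x y, x \in `[0, 1] -> y \in `[0, 1] ->
     `|h x - h y| <= A * `|u x - u y| + B * `|v x - v y|) ->
  col_osc_sum h d <= (A + B + 1) * (col_osc_sum u d + col_osc_sum v d).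
Proof.
move=> d0 A0 B0 hh hu hv H.
rewrite /col_osc_sum -big_split mulr_sumr /=; apply: ler_sum => j _.
have [_ lohi _ _] := col_itv d0 (ltn_ord j); have sub := col_sub01 d0 (ltn_ord j).
have hoscd := osc_dominated lohi A0 B0 (continuous_subspaceW sub hh)
  (continuous_subspaceW sub hu) (continuous_subspaceW sub hv)
  (fun x y xi yi => H x y (sub _ xi) (sub _ yi)).
have := osc_ge0 lohi (continuous_subspaceW sub hu).
have := osc_ge0 lohi (continuous_subspaceW sub hv).
move: hoscd; set oh := osc h _ _; set ou := osc u _ _; set ov := osc v _ _.
move=> hoscd ov0 ou0.
have scale z : 2 * z / d = z * (2 / d) by rewrite mulrAC mulrC.
rewrite !scale; set t := 2 / d; have t0 : 0 <= t by rewrite divr_ge0 // ltW.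
have := ler_wpM2r t0 hoscd; have := mulr_ge0 ou0 t0; have := mulr_ge0 ov0 t0.
nra.
Qed.

Lemma le_ereal_of_gt (x y : \bar R) :
  (forall r : R, (y < r%:E)%E -> (x <= r%:E)%E) -> (x <= y)%E.
Proof.
case: y => [y | | ] H.
- by apply/lee_addgt0Pr => e e0; apply: H; rewrite lte_fin; lra.
- by rewrite leey.
- case: x H => [x | | ] H //; last by have := H 0 (ltNyr _).
  by have := H (x - 1) (ltNyr _); rewrite lee_fin => ?; exfalso; lra.
Qed.

Lemma near0_div_oppr_ln_lt (K e : R) : 0 <= K -> 0 < e ->
  \forall x \near 0^'+, K / (- ln x) < e /\ 0 < - ln x.
Proof.
move=> K0 e0; near=> x.
have x0 : 0 < x by near: x; exact: nbhs_right_gt.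
have : x < expR (- (K / e + 1)) by near: x; apply: nbhs_right_lt; exact: expR_gt0.
rewrite -ltr_ln ?posrE ?expR_gt0 // expRK => lnx.
have Ke : K / e * e = K by field; rewrite gt_eqF.
have Ke0 : 0 <= K / e by rewrite divr_ge0 // ltW.
have L0 : 0 < - ln x by lra.
by split => //; rewrite ltr_pdivrMr //; nra.
Unshelve. all: end_near.
Qed.

Lemma limf_esup_le_max (a b c : R -> R) (K : R) : 0 <= K ->
  (\forall x \near 0^'+, a x <= Num.max (b x) (c x) + K / (- ln x)) ->
  (limf_esup (fun x => (a x)%:E) 0^'+ <=
   Order.max (limf_esup (fun x => (b x)%:E) 0^'+)
             (limf_esup (fun x => (c x)%:E) 0^'+))%E.
Proof.
move=> K0 H; apply: le_ereal_of_gt => y; rewrite gt_max => /andP[hb hc].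
apply/lee_addgt0Pr => e e0; rewrite !limf_esupE in hb hc *.
have [_ [V1 FV1 <-] s1] := ereal_inf_lt hb.
have [_ [V2 FV2 <-] s2] := ereal_inf_lt hc.
pose W := V1 `&` V2 `&` [set x | a x <= Num.max (b x) (c x) + K / (- ln x)]
   `&` [set x | K / (- ln x) < e /\ 0 < - ln x].
have FW : (0 : R)^'+ W.
  by apply: filterI; [apply: filterI; [apply: filterI|] | exact: near0_div_oppr_ln_lt].
apply: ge_ereal_inf; exists (ereal_sup ((fun x => (a x)%:E) @` W)); first by exists W.
apply/ereal_supP => _ [x [[[xV1 xV2] xa] [xe _]] <-]; rewrite lee_fin.
have : ((b x)%:E < y%:E)%E.
  by apply: le_lt_trans s1; apply: ereal_sup_ubound; exists x.
have : ((c x)%:E < y%:E)%E.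
  by apply: le_lt_trans s2; apply: ereal_sup_ubound; exists x.
rewrite !lte_fin => cx bx; have : Num.max (b x) (c x) < y by rewrite gt_max bx cx.
by move: xa xe => /=; lra.
Qed.

Lemma ln_div_le_max (N1 N2 N K L : R) : 1 <= N1 -> 1 <= N2 -> 0 < N -> 1 <= K ->
  0 < L -> N <= K * Num.max N1 N2 ->
  ln N / L <= Num.max (ln N1 / L) (ln N2 / L) + ln K / L.
Proof.
move=> N11 N21 N0 K1 L0 NK.
have M1 : 1 <= Num.max N1 N2 by rewrite le_max N11.
have lnmax : ln (Num.max N1 N2) / L <= Num.max (ln N1 / L) (ln N2 / L).
  by case: (leP N1 N2) => _; rewrite le_max lexx ?orbT.
have : ln N <= ln K + ln (Num.max N1 N2).
  rewrite -lnM ?posrE ?(lt_le_trans ltr01) // ler_ln ?posrE //.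
  by rewrite mulr_gt0 // (lt_le_trans ltr01).
move=> lnN; have : ln N / L <= (ln K + ln (Num.max N1 N2)) / L.
  by rewrite ler_pM2r ?invr_gt0.
rewrite mulrDl; lra.
Qed.

Definition dominated_on (a b : R) h u v := exists A B : R, [/\ 0 <= A, 0 <= B &
  forall x y, x \in `[a, b] -> y \in `[a, b] ->
    `|h x - h y| <= A * `|u x - u y| + B * `|v x - v y|].

Lemma upper_box_dim_dominated h u v :
  {within `[0, 1], continuous h} -> {within `[0, 1], continuous u} ->
  {within `[0, 1], continuous v} -> dominated_on 0 1 h u v ->
  (upper_box_dim (graph01 h) <=
   Order.max (upper_box_dim (graph01 u)) (upper_box_dim (graph01 v)))%E.
Proof.
move=> hh hu hv [A [B [A0 B0 H]]].
have K1 : 1 <= 42 * (A + B + 1) by nra.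
apply: (@limf_esup_le_max _ _ _ (ln (42 * (A + B + 1)))); first exact: ln_ge0.
near=> d.
have d0 : 0 < d by near: d; exact: nbhs_right_gt.
have d1 : d < 1 by near: d; exact: nbhs_right_lt.
have L0 : 0 < - ln d by rewrite oppr_gt0 ln_lt0 // d0 d1.
have [h1 h2 _] := graph_covnum_bounds d0 hh.
have [u1 _ u3] := graph_covnum_bounds d0 hu.
have [v1 _ v3] := graph_covnum_bounds d0 hv.
have hsum := col_osc_sum_dominated d0 A0 B0 hh hu hv H.
apply: (ln_div_le_max u1 v1 (lt_le_trans ltr01 h1) K1 L0).
have uM : graph_covnum u d <= Num.max (graph_covnum u d) (graph_covnum v d).
  by rewrite le_max lexx.
have vM : graph_covnum v d <= Num.max (graph_covnum u d) (graph_covnum v d).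
  by rewrite le_max lexx orbT.
move: (Num.max _ _) uM vM => M uM vM.
apply: le_trans h2 (le_trans hsum _); nra.
Unshelve. all: end_near.
Qed.

Lemma within_continuous_norm h a b : {within `[a, b], continuous h} ->
  {within `[a, b], continuous (fun x => `|h x|)}.
Proof. by move=> hc x; apply: cvg_norm; exact: hc. Qed.

Lemma bounded_itv h a b : a <= b -> {within `[a, b], continuous h} ->
  exists M, 0 <= M /\ forall x, x \in `[a, b] -> `|h x| <= M.
Proof.
move=> ab hc; have [c _ cmax] := EVT_max ab (within_continuous_norm hc).
by exists `|h c|.
Qed.

Lemma bounded_away_itv h a b : a <= b -> {within `[a, b], continuous h} ->
  (forall x, x \in `[a, b] -> h x != 0) ->
  exists m, 0 < m /\ forall x, x \in `[a, b] -> m <= `|h x|.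
Proof.
move=> ab hc hnz; have [c ci cmin] := EVT_min ab (within_continuous_norm hc).
by exists `|h c|; rewrite normr_gt0 hnz.
Qed.

Lemma within_continuous_mul f g a b :
  {within `[a, b], continuous f} -> {within `[a, b], continuous g} ->
  {within `[a, b], continuous (f \* g)}.
Proof. by move=> hf hg x; apply: cvgM; [exact: hf | exact: hg]. Qed.

Lemma mul_dominated_on f g a b : a <= b ->
  {within `[a, b], continuous f} -> {within `[a, b], continuous g} ->
  dominated_on a b (f \* g) f g.
Proof.
move=> ab hf hg.
have [Mf [Mf0 fMf]] := bounded_itv ab hf; have [Mg [Mg0 gMg]] := bounded_itv ab hg.
exists Mg, Mf; split => // x y xi yi /=.
have -> : f x * g x - f y * g y = g x * (f x - f y) + f y * (g x - g y) by ring.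
apply: le_trans (ler_normD _ _) _; rewrite !normrM.
by apply: lerD; apply: ler_wpM2r => //; [exact: gMg | exact: fMf].
Qed.

Lemma div_dominated_on f g a b : a <= b ->
  {within `[a, b], continuous f} -> {within `[a, b], continuous g} ->
  (forall x, x \in `[a, b] -> f x != 0) -> dominated_on a b g (f \* g) f.
Proof.
move=> ab hf hg fnz; have [Mf [Mf0 fMf]] := bounded_itv ab hf.
have [M [M0 fgM]] := bounded_itv ab (within_continuous_mul hf hg).
have [m [m0 fm]] := bounded_away_itv ab hf fnz; have mm : 0 < m * m by rewrite mulr_gt0.
exists (Mf / (m * m)), (M / (m * m)).
split; [by rewrite divr_ge0 // ltW | by rewrite divr_ge0 // ltW | move=> x y xi yi /=].
set P := `|_ - f y * g y|; set Q := `|f x - f y|.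
have -> : Mf / (m * m) * P + M / (m * m) * Q = (Mf * P + M * Q) / (m * m) by ring.
rewrite ler_pdivlMr // {}/P {}/Q.
have e : (g x - g y) * (f x * f y) =
    f y * (f x * g x - f y * g y) - f y * g y * (f x - f y) by ring.
apply: le_trans (_ : `|g x - g y| * (`|f x| * `|f y|) <= _).
  by apply: ler_wpM2l => //; apply: ler_pM; rewrite ?(ltW m0) ?fm.
rewrite -!normrM e; apply: le_trans (ler_normB _ _) _; rewrite !normrM.
by apply: lerD; apply: ler_wpM2r => //; [exact: fMf | rewrite -normrM; exact: fgM].
Qed.

Lemma eq_max_of_le_max3 (a b c : \bar R) : b != c -> (a <= Order.max b c)%E ->
  (c <= Order.max a b)%E -> (b <= Order.max a c)%E -> a = Order.max b c.
Proof.
rewrite /Order.max => neq H1 H2 H3.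
case: (ltgtP b c) neq H1 H2 H3 => // hbc _ H1 H2 H3; apply: le_anti; rewrite H1 /=.
  by move: H2; case: (ltgtP a b) => hab H2 //; have := lt_le_trans hbc H2; rewrite ltxx.
by move: H3; case: (ltgtP a c) => hac H3 //; have := lt_le_trans hbc H3; rewrite ltxx.
Qed.

End GraphBoxDimension.

Theorem proposition3p5 (R : realType) (f g : R -> R) :
  {within `[0%R, 1%R], continuous f} ->
  {within `[0%R, 1%R], continuous g} ->
  (forall x, x \in `[0, 1] -> f x != 0) ->
  (forall x, x \in `[0, 1] -> g x != 0) ->
  upper_box_dim (graph01 f) != upper_box_dim (graph01 g) ->
  upper_box_dim (graph01 (f \* g)) =
    Order.max (upper_box_dim (graph01 f)) (upper_box_dim (graph01 g)).
Proof.
move=> hf hg fnz gnz dim_neq.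
have hfg := within_continuous_mul hf hg.
apply: eq_max_of_le_max3 dim_neq _ _ _.
- exact: upper_box_dim_dominated hfg hf hg (mul_dominated_on ler01 hf hg).
- exact: upper_box_dim_dominated hg hfg hf (div_dominated_on ler01 hf hg fnz).
- have gf : g \* f = f \* g by apply/funext => x /=; rewrite mulrC.
  have := upper_box_dim_dominated hf (within_continuous_mul hg hf) hg
    (div_dominated_on ler01 hg hf gnz).
  by rewrite gf.
Qed.
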